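(* Let $\Gamma$ be a $\Bbbk$-algebra and $\sim$ an equivalence relation on $\mathrm{cfs}(\Gamma)$. If $V$ is a strong block module, then for each $B\in\mathrm{cfs}(\Gamma)/{\sim}$ there is a decomposition of $\Gamma$-modules $V=V(B)\oplus V'$ where $\mathfrak mV'=V'$ for all $\mathfrak m\in\mathcal W(B)$ and $\mathfrak mV(B)=0$ for some $\mathfrak m\in\mathcal W(B)$.
   Context: $\mathrm{cfs}(\Gamma)$: maximal two-sided ideals $\mathfrak m$ of $\Gamma$ with $\dim\Gamma/\mathfrak m<\infty$. For a class $B$, $\mathcal W(B)=\{\mathfrak m_1\cdots\mathfrak m_k:k\ge0,\mathfrak m_i\in B\}$; for a $\Gamma$-module $V$, $V(B)=\{v:\mathfrak mv=0$ for some $\mathfrak m\in\mathcal W(B)\}$. $V$ is a strong block module if $V=\bigoplus_BV(B)$ and for each $B$ there is $\mathfrak m\in\mathcal W(B)$ with $\mathfrak mV(B)=0$. *)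

From mathcomp Require Import all_boot all_algebra.
From Stdlib Require List.
Set Implicit Arguments. Unset Strict Implicit. Unset Printing Implicit Defensive.
Import GRing.Theory.
Local Open Scope ring_scope.

Section Defs.
Variables (k : fieldType) (G : algType k).

Definition ideal2 (I : G -> Prop) : Prop :=
  [/\ I 0, (forall x y, I x -> I y -> I (x + y)),
      (forall a x, I x -> I (a * x)) & (forall a x, I x -> I (x * a))].

Definition max_ideal2 (m : G -> Prop) : Prop :=
  [/\ ideal2 m, (exists x, ~ m x) &
      (forall J, ideal2 J -> (forall x, m x -> J x) -> (exists x, ~ J x) ->
         forall x, J x -> m x)].

(* dim_k (G / m) < oo : finitely many elements span G modulo m *)
Definition fin_codim (m : G -> Prop) : Prop :=
  exists n (b : 'I_n -> G), forall x, exists c : 'I_n -> k,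
    m (x - \sum_(i < n) c i *: b i).

Definition cfs (m : G -> Prop) : Prop := max_ideal2 m /\ fin_codim m.

Definition prodI (I J : G -> Prop) : G -> Prop :=
  fun x => exists s : seq (G * G),
    (forall p, p \in s -> I p.1 /\ J p.2) /\ x = \sum_(p <- s) p.1 * p.2.

Definition prodl (ms : seq (G -> Prop)) : G -> Prop :=
  foldr prodI (fun _ => True) ms.

Definition cls (R : (G -> Prop) -> (G -> Prop) -> Prop) (m0 : G -> Prop)
  : (G -> Prop) -> Prop := fun m => cfs m /\ R m0 m.

(* "m in W(B)" is rendered as: m = prodl ms with List.Forall B ms *)

Variable V : lmodType G.

Definition submod (U : V -> Prop) : Prop :=
  [/\ U 0, (forall u v, U u -> U v -> U (u + v)) & (forall a u, U u -> U (a *: u))].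

Definition ann (I : G -> Prop) (U : V -> Prop) : Prop :=
  forall a u, I a -> U u -> a *: u = 0.

Definition smul (I : G -> Prop) (U : V -> Prop) : V -> Prop :=
  fun w => exists s : seq (G * V),
    (forall p, p \in s -> I p.1 /\ U p.2) /\ w = \sum_(p <- s) p.1 *: p.2.

Definition Vblk (B : (G -> Prop) -> Prop) : V -> Prop :=
  fun v => exists ms, List.Forall B ms /\ ann (prodl ms) (eq v).

(* V is a strong block module for the equivalence relation R on cfs(G):
   V = (+)_B V(B) (every v is a finite sum of elements of V(B)'s for distinct
   classes B, and such sums are direct), and each V(B) is killed by some
   element of W(B). Classes B are given by representatives m0 in cfs(G). *)
Definition strong_block (R : (G -> Prop) -> (G -> Prop) -> Prop) : Prop :=
  [/\ (forall v, exists n (r : 'I_n -> G -> Prop) (w : 'I_n -> V),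
         [/\ forall i, cfs (r i),
             forall i j, i != j -> ~ R (r i) (r j),
             forall i, Vblk (cls R (r i)) (w i) &
             v = \sum_(i < n) w i]),
      (forall n (r : 'I_n -> G -> Prop) (w : 'I_n -> V),
         (forall i, cfs (r i)) -> (forall i j, i != j -> ~ R (r i) (r j)) ->
         (forall i, Vblk (cls R (r i)) (w i)) ->
         \sum_(i < n) w i = 0 -> forall i, w i = 0) &
      (forall m0, cfs m0 -> exists ms, List.Forall (cls R m0) ms /\
         ann (prodl ms) (Vblk (cls R m0)))].

End Defs.

From mathcomp Require Import all_boot all_algebra.
From Stdlib Require List.
From Stdlib Require Import Classical_Prop FunctionalExtensionality PropExtensionality.
Set Implicit Arguments. Unset Strict Implicit. Unset Printing Implicit Defensive.
Import GRing.Theory.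
Local Open Scope ring_scope.

(* Take for V' the sum of the blocks V(B') with B' <> B.  Distinct maximal
   ideals are comaximal, hence so are any element of W(B) and any element of
   W(B'); since V(B') is killed by an element of W(B'), every v in V' satisfies
   a v = v for some a in a prescribed m in W(B).  This gives both m V' = V' and
   V(B) ∩ V' = 0 (take m killing V(B)), while V = V(B) + V' is the block
   decomposition of V with the summands sorted according to their class. *)

Section Ideals.
Variables (k : fieldType) (G : algType k).
Implicit Types I J K m : G -> Prop.

Definition comax I J := exists a b, [/\ I a, J b & a + b = 1].

Definition addI I J : G -> Prop := fun x => exists a b, [/\ I a, J b & x = a + b].

Lemma comaxC I J : comax I J -> comax J I.
Proof. by case=> a [b [Ia Jb ab1]]; exists b, a; rewrite addrC. Qed.

Lemma ideal2_addI I J : ideal2 I -> ideal2 J -> ideal2 (addI I J).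
Proof.
case=> I0 ID IL IR [J0 JD JL JR]; split.
- by exists 0, 0; rewrite addr0.
- move=> _ _ [a [b [Ia Jb ->]]] [a' [b' [Ia' Jb' ->]]].
  by exists (a + a'), (b + b'); rewrite addrACA; split; [exact: ID | exact: JD |].
- move=> c _ [a [b [Ia Jb ->]]].
  by exists (c * a), (c * b); rewrite mulrDr; split; [exact: IL | exact: JL |].
- move=> c _ [a [b [Ia Jb ->]]].
  by exists (a * c), (b * c); rewrite mulrDl; split; [exact: IR | exact: JR |].
Qed.

Lemma ideal2_prodI I J : ideal2 I -> ideal2 J -> ideal2 (prodI I J).
Proof.
case=> I0 ID IL IR [J0 JD JL JR]; split.
- by exists [::]; rewrite big_nil.
- move=> _ _ [s [Hs ->]] [s' [Hs' ->]]; exists (s ++ s'); rewrite big_cat.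
  by split=> // p; rewrite mem_cat => /orP[/Hs|/Hs'].
- move=> a _ [s [Hs ->]]; exists [seq (a * p.1, p.2) | p <- s]; split.
    by move=> _ /mapP[p /Hs[Ip Jp] ->]; split=> //; exact: IL.
  by rewrite big_map mulr_sumr; apply: eq_bigr => p _; rewrite mulrA.
- move=> a _ [s [Hs ->]]; exists [seq (p.1, p.2 * a) | p <- s]; split.
    by move=> _ /mapP[p /Hs[Ip Jp] ->]; split=> //; exact: JR.
  by rewrite big_map mulr_suml; apply: eq_bigr => p _; rewrite mulrA.
Qed.

Lemma ideal2_prodl (B : (G -> Prop) -> Prop) ms :
  (forall m, B m -> ideal2 m) -> List.Forall B ms -> ideal2 (prodl ms).
Proof.
move=> idealB; elim=> [|m {}ms Bm _ IHms] /=; first by split.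
exact: ideal2_prodI (idealB m Bm) IHms.
Qed.

(* If the maximal ideals were not comaximal, m + m' would be a proper ideal,
   forcing m' <= m and then m <= m'. *)
Lemma max_ideal2_comax m m' :
  max_ideal2 m -> max_ideal2 m' -> ~ comax m m' -> m = m'.
Proof.
case=> Im m_proper max_m [Im' _ max_m'] not_comax.
have m'_sub_m x : m' x -> m x.
  move=> m'x; apply: (max_m _ (ideal2_addI Im Im')).
  - by move=> y my; exists y, 0; rewrite addr0; split=> //; case: Im'.
  - by exists 1 => -[a [b [ma m'b ab1]]]; apply: not_comax; exists a, b.
  - by exists 0, x; rewrite add0r; split=> //; case: Im.
apply: functional_extensionality => x; apply: propositional_extensionality.
by split; [exact: max_m' Im m'_sub_m m_proper x | exact: m'_sub_m].
Qed.

(* From a + b = 1 and a' + c = 1: the I-part collects every term containing a or a'. *)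
Lemma comax_prodI I J K : ideal2 I -> comax I J -> comax I K -> comax I (prodI J K).
Proof.
case=> _ ID IL IR [a [b [Ia Jb ab1]]] [a' [c [Ia' Kc a'c1]]].
exists (a * (a' + c) + b * a'), (b * c); split.
- by apply: ID; [exact: IR | exact: IL].
- by exists [:: (b, c)]; rewrite big_seq1; split=> // p; rewrite inE => /eqP->.
- by rewrite -addrA -mulrDr -mulrDl ab1 mul1r a'c1.
Qed.

Lemma comax_prodl I (B : (G -> Prop) -> Prop) ms :
  ideal2 I -> (forall m, B m -> comax I m) -> List.Forall B ms -> comax I (prodl ms).
Proof.
move=> II comaxB; elim=> [|m {}ms Bm _ IHms] /=.
  by exists 0, 1; rewrite add0r; split=> //; case: II.
exact: comax_prodI II (comaxB m Bm) IHms.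
Qed.

Lemma comax_prodl2 (B B' : (G -> Prop) -> Prop) ms ms' :
  (forall m, B m -> ideal2 m) -> (forall m, B' m -> ideal2 m) ->
  (forall m m', B m -> B' m' -> comax m m') ->
  List.Forall B ms -> List.Forall B' ms' -> comax (prodl ms) (prodl ms').
Proof.
move=> idealB idealB' comaxBB' Bms B'ms'; apply: comaxC.
apply: comax_prodl (ideal2_prodl idealB' B'ms') _ Bms => m Bm; apply: comaxC.
exact: comax_prodl (idealB m Bm) (fun m' => comaxBB' m m' Bm) B'ms'.
Qed.

End Ideals.

Section Modules.
Variables (k : fieldType) (G : algType k) (V : lmodType G).
Implicit Types (I J : G -> Prop) (U P : V -> Prop) (B : (G -> Prop) -> Prop).

Definition fixed_by I (v : V) := exists a, I a /\ a *: v = v.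

Definition span P : V -> Prop :=
  fun v => exists s : seq V, (forall w, w \in s -> P w) /\ v = \sum_(w <- s) w.

Lemma span_sub P v : P v -> span P v.
Proof. by exists [:: v]; rewrite big_seq1; split=> // w; rewrite inE => /eqP->. Qed.

Lemma submod_span P : (forall a u, P u -> P (a *: u)) -> submod (span P).
Proof.
move=> scaleP; split.
- by exists [::]; rewrite big_nil.
- move=> _ _ [s [Ps ->]] [s' [Ps' ->]]; exists (s ++ s'); rewrite big_cat.
  by split=> // w; rewrite mem_cat => /orP[/Ps|/Ps'].
- move=> a _ [s [Ps ->]]; exists [seq a *: w | w <- s]; rewrite big_map scaler_sumr.
  by split=> // _ /mapP[w /Ps Pw ->]; exact: scaleP.
Qed.

Lemma submod_smul I U v : submod U -> smul I U v -> U v.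
Proof.
case=> U0 UD UZ [s [Us ->]]; rewrite big_seq.
by apply: big_ind => // p /Us[_ Up]; exact: UZ.
Qed.

Lemma smul_fixed_by I U v : U v -> fixed_by I v -> smul I U v.
Proof.
move=> Uv [a [Ia av]]; exists [:: (a, v)]; rewrite big_seq1 av.
by split=> // p; rewrite inE => /eqP->.
Qed.

(* With a1 + b1 = 1 (a1 in I, b1 in J) and a' v = v, the element
   a1 + b1 a' = 1 - b1 (1 - a') of I fixes u + v, as J kills (1 - a') u. *)
Lemma fixed_by_addl I J U u v : ideal2 I -> submod U -> ann J U -> comax I J ->
  U u -> fixed_by I v -> fixed_by I (u + v).
Proof.
case=> _ ID IL _ [_ _ UZ] annJU [a1 [b1 [Ia1 Jb1 ab1]]] Uu [a' [Ia' a'v]].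
have kill : b1 *: ((1 - a') *: (u + v)) = 0.
  rewrite scalerDr [X in _ + X]scalerBl scale1r a'v subrr addr0.
  exact: annJU (UZ _ _ Uu).
exists (a1 + b1 * a'); split; first by apply: ID => //; exact: IL.
have -> : a1 + b1 * a' = 1 - b1 * (1 - a').
  by rewrite mulrBr mulr1 opprB -ab1 addrCA addrK addrC.
by rewrite scalerBl scale1r -scalerA kill subr0.
Qed.

Lemma fixed_by_span I P v : ideal2 I ->
  (forall u, P u -> exists U J, [/\ submod U, ann J U, comax I J & U u]) ->
  span P v -> fixed_by I v.
Proof.
move=> II blockP [s [Ps ->]]; rewrite big_seq; apply: big_rec.
  by exists 0; rewrite scaler0; split=> //; case: II.
move=> u w /Ps/blockP[U [J [subU annJU comaxIJ Uu]]].
exact: fixed_by_addl II subU annJU comaxIJ Uu.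
Qed.

Lemma Vblk_sub B B' v : (forall m, B m -> B' m) -> Vblk B v -> @Vblk _ _ V B' v.
Proof. by move=> subB [ms [Bms annv]]; exists ms; split=> //; exact: List.Forall_impl Bms. Qed.

Lemma submod_Vblk B ms : (forall m, B m -> ideal2 m) -> List.Forall B ms ->
  ann (prodl ms) (@Vblk _ _ V B) -> submod (@Vblk _ _ V B).
Proof.
move=> idealB Bms annB; have [_ _ _ IR] := ideal2_prodl idealB Bms; split.
- by exists [::]; split=> // a _ _ <-; rewrite scaler0.
- move=> u w Bu Bw; exists ms; split=> // a _ Ia <-.
  by rewrite scalerDr !(annB a) ?addr0.
- move=> a u Bu; exists ms; split=> // x _ Ix <-.
  by rewrite scalerA; apply: annB Bu; exact: IR.
Qed.

End Modules.

Section Blocks.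
Variables (k : fieldType) (G : algType k) (V : lmodType G).
Variable R : (G -> Prop) -> (G -> Prop) -> Prop.
Hypothesis Rsym : forall m m', cfs m -> cfs m' -> R m m' -> R m' m.
Hypothesis Rtrans : forall m1 m2 m3, cfs m1 -> cfs m2 -> cfs m3 ->
  R m1 m2 -> R m2 m3 -> R m1 m3.
Hypothesis Vblk_ann : forall c, cfs c -> exists ms,
  List.Forall (cls R c) ms /\ ann (prodl ms) (@Vblk _ _ V (cls R c)).
Variables (m0 : G -> Prop) (cfs_m0 : cfs m0).

Definition other_blocks : V -> Prop :=
  span (fun w => exists c, [/\ cfs c, ~ R m0 c & Vblk (cls R c) w]).

Lemma ideal2_cls c m : cls R c m -> ideal2 m.
Proof. by case=> [[[]]]. Qed.

Lemma submod_Vblk_cls c : cfs c -> submod (@Vblk _ _ V (cls R c)).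
Proof.
move=> cfs_c; have [ms [Bms annB]] := Vblk_ann cfs_c.
exact: submod_Vblk (@ideal2_cls c) Bms annB.
Qed.

Lemma cls_trans c m : cfs c -> R m0 c -> cls R c m -> cls R m0 m.
Proof. by move=> cfs_c Rm0c [cfs_m Rcm]; split=> //; exact: Rtrans Rm0c Rcm. Qed.

Lemma comax_cls c ms ms' : cfs c -> ~ R m0 c ->
  List.Forall (cls R m0) ms -> List.Forall (cls R c) ms' -> comax (prodl ms) (prodl ms').
Proof.
move=> cfs_c not_Rm0c; apply: comax_prodl2 (@ideal2_cls m0) (@ideal2_cls c) _.
move=> m m' [cfs_m Rm0m] [cfs_m' Rcm']; apply: NNPP => not_comax.
move: Rcm'; rewrite -(max_ideal2_comax cfs_m.1 cfs_m'.1 not_comax) => Rcm.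
by apply: not_Rm0c; exact: Rtrans Rm0m (Rsym cfs_c cfs_m Rcm).
Qed.

Lemma submod_other_blocks : submod other_blocks.
Proof.
apply: submod_span => a u [c [cfs_c not_Rm0c Bu]]; exists c; split=> //.
by have [_ _ ZB] := submod_Vblk_cls cfs_c; exact: ZB.
Qed.

Lemma fixed_by_other_blocks ms v :
  List.Forall (cls R m0) ms -> other_blocks v -> fixed_by (prodl ms) v.
Proof.
move=> Bms; apply: fixed_by_span (ideal2_prodl (@ideal2_cls m0) Bms) _.
move=> u [c [cfs_c not_Rm0c Bu]]; have [ms' [B'ms' annB']] := Vblk_ann cfs_c.
exists (Vblk (cls R c)), (prodl ms'); split=> //; first exact: submod_Vblk_cls.
exact: comax_cls not_Rm0c Bms B'ms'.
Qed.

Lemma Vblk_add_other_blocks n (r : 'I_n -> G -> Prop) (w : 'I_n -> V) :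
  (forall i, cfs (r i)) -> (forall i, Vblk (cls R (r i)) (w i)) ->
  exists a b, [/\ Vblk (cls R m0) a, other_blocks b & \sum_(i < n) w i = a + b].
Proof.
move=> cfs_r Bw; have [B0 BD _] := submod_Vblk_cls cfs_m0.
have [O0 OD _] := submod_other_blocks.
apply: (big_ind (fun v => exists a b, [/\ Vblk (cls R m0) a, other_blocks b & v = a + b])).
- by exists 0, 0; rewrite addr0.
- move=> _ _ [a [b [Ba Ob ->]]] [a' [b' [Ba' Ob' ->]]].
  by exists (a + a'), (b + b'); rewrite addrACA; split; [exact: BD | exact: OD |].
- move=> i _; have [Rm0ri | not_Rm0ri] := classic (R m0 (r i)).
  + exists (w i), 0; rewrite addr0; split=> //.
    by apply: Vblk_sub (Bw i) => m; exact: cls_trans (cfs_r i) Rm0ri.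
  + by exists 0, (w i); rewrite add0r; split=> //; apply: span_sub; exists (r i).
Qed.

End Blocks.

Theorem mainTheorem17 (k : fieldType) (G : algType k)
  (R : (G -> Prop) -> (G -> Prop) -> Prop)
  (Rrefl : forall m, cfs m -> R m m)
  (Rsym : forall m m', cfs m -> cfs m' -> R m m' -> R m' m)
  (Rtrans : forall m1 m2 m3, cfs m1 -> cfs m2 -> cfs m3 ->
              R m1 m2 -> R m2 m3 -> R m1 m3)
  (V : lmodType G) :
  strong_block V R ->
  forall m0 : G -> Prop, cfs m0 ->
  exists V' : V -> Prop,
    [/\ submod (@Vblk _ _ V (cls R m0)) /\ submod V',
        (forall v, exists a b, [/\ @Vblk _ _ V (cls R m0) a, V' b & v = a + b]),
        (forall v, @Vblk _ _ V (cls R m0) v -> V' v -> v = 0),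
        (forall ms, List.Forall (cls R m0) ms ->
           forall v, V' v <-> smul (prodl ms) V' v) &
        (exists ms, List.Forall (cls R m0) ms /\
           ann (prodl ms) (@Vblk _ _ V (cls R m0)))].
Proof.
move=> [decomp _ Vblk_ann] m0 cfs_m0.
have fixedV' := fixed_by_other_blocks Rsym Rtrans Vblk_ann cfs_m0.
exists (other_blocks R m0); split.
- by split; [exact: submod_Vblk_cls | exact: submod_other_blocks].
- move=> v; have [n [r [w [cfs_r _ Bw ->]]]] := decomp v.
  by have := Vblk_add_other_blocks Rtrans Vblk_ann cfs_m0 cfs_r Bw.
- move=> v Bv V'v; have [ms0 [Bms0 annB]] := Vblk_ann m0 cfs_m0.
  have [a [Ia av]] := fixedV' _ _ Bms0 V'v.
  by rewrite -av (annB a v).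
- move=> ms Bms v; split; last exact: submod_smul (submod_other_blocks Vblk_ann m0).
  by move=> V'v; exact: smul_fixed_by V'v (fixedV' _ _ Bms V'v).
- exact: Vblk_ann.
Qed.
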